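(* Let $m\geq 2$ be an integer and let $T$ be a tree with at least $m$ vertices. Then, for some $s$, there are subtrees $T_1,\ldots, T_s$ of $T$ which divide $T$ and satisfy $m\leq |T_i|\leq 4m$ for each $i\in [s]$.
   Context: Subtrees $T_1,\dots,T_s$ of $T$ divide $T$ if $E(T_1),\dots,E(T_s)$ form a partition of $E(T)$. $|T_i|$ is the number of vertices of $T_i$. *)

(* A finite simple graph is a symmetric irreflexive relation
   on a finType; graphs/subgraphs are given by a vertex set and an edge set,
   edges being 2-element vertex sets. *)
From mathcomp Require Import all_boot.
Set Implicit Arguments. Unset Strict Implicit. Unset Printing Implicit Defensive.

Section Trees.
Variable T : finType.

Definition edges (e : rel T) : {set {set T}} :=
  [set f : {set T} | [exists x, exists y, e x y && (f == [set x; y])]].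

Definition adj (V : {set T}) (F : {set {set T}}) : rel T :=
  fun x y => [&& x \in V, y \in V, x != y & [set x; y] \in F].

Definition is_graph (V : {set T}) (F : {set {set T}}) : Prop :=
  forall f, f \in F -> f \subset V /\ #|f| = 2.

Definition connected_graph (V : {set T}) (F : {set {set T}}) : Prop :=
  forall x y, x \in V -> y \in V -> connect (adj V F) x y.

Definition acyclic_graph (V : {set T}) (F : {set {set T}}) : Prop :=
  forall c : seq T, uniq c -> 3 <= size c -> ~~ cycle (adj V F) c.

Definition is_tree (V : {set T}) (F : {set {set T}}) : Prop :=
  [/\ is_graph V F, V != set0, connected_graph V F & acyclic_graph V F].

Definition subtree (e : rel T) (V : {set T}) (F : {set {set T}}) : Prop :=
  F \subset edges e /\ is_tree V F.

Definition divide (e : rel T) (s : nat) (Ts : 'I_s -> {set T} * {set {set T}}) : Prop :=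
  [/\ forall i, subtree e (Ts i).1 (Ts i).2,
      forall i j, i != j -> [disjoint (Ts i).2 & (Ts j).2] &
      \bigcup_(i < s) (Ts i).2 = edges e].

End Trees.

(* Say that a vertex set V of the tree is connected if it spans a subtree, and
   for a vertex y of V and a neighbour z in V call the component of V - y
   containing z the branch of V at y towards z.  When |V| > 4m we cut off a
   piece as follows.  Either all branches of V have fewer than m vertices, or we
   take a branch of size at least m that is as small as possible, with root y;
   in both cases some branches at y are all smaller than m but have at least
   m - 1 vertices in total.  Hence a subfamily of them has total size
   between m - 1 and 2(m - 1); together with y it spans a subtree with between
   m and 2m - 1 vertices, and V minus these branches is connected with more
   than m vertices.  The two parts share only y, so their edge sets partition
   that of V, and induction on |V| finishes the division. *)

From mathcomp Require Import all_boot zify.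
Set Implicit Arguments. Unset Strict Implicit. Unset Printing Implicit Defensive.

Section SetSums.
Variables I T : finType.

Lemma card_bigcup_disjoint (Z : {set I}) (F : I -> {set T}) :
  {in Z &, forall a b, a != b -> [disjoint F a & F b]} ->
  #|\bigcup_(z in Z) F z| = \sum_(z in Z) #|F z|.
Proof.
move=> disjF; rewrite big_mkcond /= -sum1_card partition_disjoint_bigcup /=.
  rewrite [RHS]big_mkcond; apply: eq_bigr => z _.
  by case: (z \in Z); rewrite sum1_card ?cards0.
move=> a b ab; case aZ: (a \in Z); last exact/eq_disjoint0/in_set0.
by case bZ: (b \in Z); [apply: disjF | rewrite disjoint_sym; apply/eq_disjoint0/in_set0].
Qed.

Lemma subset_sum_between (k : nat) (w : I -> nat) (Z : {set I}) :
  k <= \sum_(z in Z) w z -> {in Z, forall z, w z <= k} ->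
  exists2 Z' : {set I}, Z' \subset Z & k <= \sum_(z in Z') w z <= k.*2.
Proof.
(* A minimal subfamily reaching [k] exceeds it by less than one weight. *)
move=> kZ wk.
pose P := [pred A : {set I} | (A \subset Z) && (k <= \sum_(z in A) w z)].
have PZ : P Z by rewrite /= subxx kZ.
have [Z' /andP[sZ'Z kZ'] minZ'] := arg_minnP (fun A : {set I} => #|A|) PZ.
exists Z' => //; rewrite kZ' /=.
have [Z'0|[a aZ']] := set_0Vmem Z'; first by move: kZ'; rewrite Z'0 big_set0; lia.
rewrite (big_setD1 a aZ') /= -addnn leq_add ?wk ?(subsetP sZ'Z) // ltnW //.
rewrite ltnNge; apply/negP => kZ'a.
have := minZ' (Z' :\ a); rewrite /= kZ'a (subset_trans (subsetDl _ _) sZ'Z) /=.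
by rewrite (cardsD1 a Z') aZ' => /(_ isT); lia.
Qed.

End SetSums.

Section Forest.
Variables (T : finType) (e : rel T).
Hypothesis e_sym : symmetric e.
Hypothesis e_irr : irreflexive e.
Hypothesis e_acyclic : forall c : seq T, uniq c -> 3 <= size c -> ~~ cycle e c.
Implicit Types (A B S V : {set T}) (x y z : T).

Definition restr (V : {set T}) : rel T := [rel x y in V | e x y].

Definition connected_in (V : {set T}) : Prop :=
  {in V &, forall x y, connect (restr V) x y}.

Definition nbhd (V : {set T}) (y : T) : {set T} := [set z in V | e y z].

Definition branch (V : {set T}) (y z : T) : {set T} :=
  [set w in V :\ y | connect (restr (V :\ y)) z w].

Lemma restr_sym V : symmetric (restr V).
Proof. by move=> x y; rewrite /restr /= e_sym (andbC (x \in V)). Qed.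

Lemma connect_restr_sub (S S' : {set T}) a b :
  S \subset S' -> connect (restr S) a b -> connect (restr S') a b.
Proof.
move=> sSS'; apply: connect_sub => x y /andP[/andP[xS yS] exy]; apply: connect1.
by rewrite /restr /= !(subsetP sSS') ?exy.
Qed.

Lemma path_restr (S : {set T}) x p :
  x \in S -> path (restr S) x p = path e x p && all (mem S) p.
Proof.
elim: p x => //= y p IH x xS; rewrite /restr /= xS /=.
by case yS: (y \in S); rewrite ?andbF //= IH // andbA.
Qed.

Lemma connected_in_root (S : {set T}) y :
  y \in S -> {in S, forall a, connect (restr S) y a} -> connected_in S.
Proof.
move=> yS Sy a b aS bS; apply: connect_trans (Sy b bS).
by rewrite (sym_connect_sym (@restr_sym S)) Sy.
Qed.

Lemma branch_sub V y z : branch V y z \subset V :\ y.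
Proof. by apply/subsetP => w; rewrite inE => /andP[]. Qed.

Lemma mem_branch V y z : z \in nbhd V y -> z \in branch V y z.
Proof.
rewrite inE => /andP[zV eyz]; rewrite !inE zV connect0 !andbT.
by apply: contraTneq eyz => ->; rewrite e_irr.
Qed.

Lemma connect_branch V y z w :
  z \in nbhd V y -> w \in branch V y z -> connect (restr (branch V y z)) z w.
Proof.
move=> /mem_branch zB; rewrite inE => /andP[_ /connectP[p zp ->]].
have zVy : z \in V :\ y by move: zB; rewrite inE => /andP[].
have /andP[ep pVy] : path e z p && all (mem (V :\ y)) p by rewrite -path_restr.
apply/connectP; exists p; rewrite // path_restr // ep; apply/allP => u up /=.
rewrite in_set (path_connect zp) ?andbT; first exact: (allP pVy).
by rewrite inE up orbT.
Qed.

Lemma branch_closed V y z a b :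
  a \in branch V y z -> b \in V -> b != y -> e a b -> b \in branch V y z.
Proof.
rewrite !inE => /andP[/andP[ay aV] za] bV b_y eab; rewrite b_y bV /=.
by apply: connect_trans za (connect1 _); rewrite /restr /= !inE ay aV b_y bV.
Qed.

(* Two branches at [y] sharing a vertex would close a cycle through [y]. *)
Lemma branch_disjoint V y z1 z2 :
  z1 \in nbhd V y -> z2 \in nbhd V y -> z1 != z2 ->
  [disjoint branch V y z1 & branch V y z2].
Proof.
move=> z1N z2N z12; apply/pred0P => w /=; apply/negP => /andP[].
rewrite !inE => /andP[_ z1w] /andP[_ z2w].
have /connectP[p z1p z2_last] : connect (restr (V :\ y)) z1 z2.
  by apply: connect_trans z1w _; rewrite (sym_connect_sym (@restr_sym _)).
case: (shortenP z1p) z2_last => {z1p}p z1p p_uniq _ z2_last.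
have z1Vy := subsetP (branch_sub V y z1) _ (mem_branch z1N).
move: z1N z2N; rewrite !inE => /andP[_ eyz1] /andP[_ eyz2].
have /andP[ep pVy] : path e z1 p && all (mem (V :\ y)) p by rewrite -path_restr.
have z1pVy : all (mem (V :\ y)) (z1 :: p) by rewrite /= z1Vy.
have y_notin : y \notin z1 :: p by apply/negP => /(allP z1pVy); rewrite !inE eqxx.
have p_nil : p != [::] by apply: contraNneq z12 => p0; rewrite z2_last p0.
have c_uniq : uniq (y :: z1 :: p) by rewrite [uniq (y :: _)]/= y_notin.
have := e_acyclic c_uniq; rewrite /= !ltnS lt0n size_eq0 p_nil rcons_path ep.
by rewrite -z2_last [e z2 y]e_sym eyz1 eyz2 => /(_ isT).
Qed.

Lemma branch_of_connect (S V : {set T}) y w :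
  S \subset V -> w != y -> connect (restr S) y w ->
  exists2 z, z \in nbhd S y & w \in branch V y z.
Proof.
move=> sSV wy /connectP[p yp w_last].
case: (shortenP yp) w_last => {yp p}p yp p_uniq _ w_last.
case: p yp p_uniq w_last => [|z q] /=; first by move=> _ _ w_y; rewrite w_y eqxx in wy.
move=> /andP[/andP[/andP[yS zS] eyz] zq] /andP[y_notin q_uniq] w_last.
exists z; first by rewrite inE zS.
have /andP[ezq qS] : path e z q && all (mem S) q by rewrite -path_restr.
have qVy : {subset z :: q <= V :\ y}.
  move=> u uzq; rewrite !inE (subsetP sSV) ?andbT; last first.
    by move: uzq; rewrite inE => /predU1P[->|/(allP qS)].
  by apply: contraNneq y_notin => <-.
rewrite inE qVy ?w_last ?mem_last //; apply/connectP; exists q => //.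
rewrite path_restr ?qVy ?mem_head // ezq.
by apply/allP => u uq; apply: qVy; rewrite inE uq orbT.
Qed.

Lemma nbhd_sym V x y : x \in V -> y \in nbhd V x -> x \in nbhd V y.
Proof. by move=> xV; rewrite !inE xV e_sym => /andP[]. Qed.

Lemma branch_proper V x y z :
  x \in V -> y \in nbhd V x -> z \in nbhd V y :\ x ->
  branch V y z \proper branch V x y.
Proof.
move=> xV yN; rewrite in_setD1 => /andP[zx zN].
have xN := nbhd_sym xV yN.
have x_notin : x \notin branch V y z.
  by rewrite (disjointFl (branch_disjoint zN xN zx)) // mem_branch.
have sBVx : branch V y z \subset V :\ x.
  apply/subsetP => u uB; rewrite !inE (subsetP (subsetDl V [set y])) ?andbT.
    by apply: contraNneq x_notin => <-.
  exact: (subsetP (branch_sub V y z)).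
have yB := mem_branch yN; apply/properP; split; last first.
  by exists y => //; apply/negP => /(subsetP (branch_sub V y z)); rewrite !inE eqxx.
apply/subsetP => u uB; rewrite inE (subsetP sBVx) //=.
apply: connect_trans (connect1 _) (connect_restr_sub sBVx (connect_branch zN uB)).
rewrite /restr /= (subsetP (branch_sub V x y) y yB) (subsetP sBVx z (mem_branch zN)).
by move: zN; rewrite inE => /andP[].
Qed.

Lemma branch_cover V x y :
  y \in nbhd V x ->
  branch V x y :\ y \subset \bigcup_(z in nbhd V y :\ x) branch V y z.
Proof.
move=> yN; apply/subsetP => u; rewrite in_setD1 => /andP[uy uB].
have sBV : branch V x y \subset V := subset_trans (branch_sub V x y) (subsetDl _ _).
have [z zN uBz] := branch_of_connect sBV uy (connect_branch yN uB).
apply/bigcupP; exists z => //.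
by move: zN; rewrite !inE => /andP[/andP[/andP[-> ->] _] ->].
Qed.

Lemma nbhd_cover V y :
  connected_in V -> y \in V -> V :\ y \subset \bigcup_(z in nbhd V y) branch V y z.
Proof.
move=> conV yV; apply/subsetP => u; rewrite in_setD1 => /andP[uy uV].
have [z zN uBz] := branch_of_connect (subxx V) uy (conV _ _ yV uV).
by apply/bigcupP; exists z.
Qed.

Lemma connected_in_star S V y :
  y \in S ->
  (forall a, a \in S -> a != y ->
     exists2 z, z \in nbhd V y & (a \in branch V y z) && (branch V y z \subset S)) ->
  connected_in S.
Proof.
move=> yS star; apply: (connected_in_root yS) => a aS.
have [->|ay] := eqVneq a y; first exact: connect0.
have [z zN /andP[aB sBS]] := star a aS ay.
apply: connect_trans (connect1 _) (connect_restr_sub sBS (connect_branch zN aB)).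
rewrite /restr /= yS (subsetP sBS z (mem_branch zN)) /=.
by move: zN; rewrite inE => /andP[].
Qed.

Definition iedges S : {set {set T}} := [set f in edges e | f \subset S].

Lemma mem_iedges S f : (f \in iedges S) = (f \in edges e) && (f \subset S).
Proof. by rewrite in_set. Qed.

Lemma edgesP f : reflect (exists x y, e x y /\ f = [set x; y]) (f \in edges e).
Proof.
rewrite inE; apply: (iffP existsP) => [[x /existsP[y /andP[exy /eqP ->]]]|].
  by exists x, y.
by case=> x [y [exy ->]]; exists x; apply/existsP; exists y; rewrite exy eqxx.
Qed.

Lemma card_edge f : f \in edges e -> #|f| = 2.
Proof.
case/edgesP => x [y [exy ->]]; rewrite cards2.
by case: eqVneq exy => [->|]; rewrite ?e_irr.
Qed.

Lemma mem_edges_set2 x y : ([set x; y] \in edges e) = e x y.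
Proof.
apply/idP/idP => [xyE|exy]; last by apply/edgesP; exists x, y.
have xy : x != y by move: (card_edge xyE); rewrite cards2; case: eqVneq.
case/edgesP: xyE => a [b [eab xy_ab]].
have xab : x \in [set a; b] by rewrite -xy_ab set21.
have yab : y \in [set a; b] by rewrite -xy_ab set22.
case/set2P: xab xy => ->; case/set2P: yab => ->; rewrite ?eqxx // => _.
by rewrite e_sym.
Qed.

Lemma iedges_sub (S S' : {set T}) : S \subset S' -> iedges S \subset iedges S'.
Proof.
move=> sSS'; apply/subsetP => f; rewrite !mem_iedges => /andP[-> fS] /=.
exact: subset_trans fS sSS'.
Qed.

Lemma iedges0 : iedges set0 = set0.
Proof.
apply/setP => f; rewrite mem_iedges in_set0 subset0; apply/negP => /andP[fE /eqP f0].
by move: (card_edge fE); rewrite f0 cards0.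
Qed.

Lemma iedges_setU A B :
  {in A & B, forall a b, e a b -> (a \in B) || (b \in A)} ->
  iedges (A :|: B) = iedges A :|: iedges B.
Proof.
move=> AB_edge; apply/eqP; rewrite eqEsubset subUset.
rewrite (iedges_sub (subsetUl A B)) (iedges_sub (subsetUr A B)) !andbT.
apply/subsetP => f; rewrite in_setU !mem_iedges => /andP[fE]; rewrite fE /=.
case/edgesP: (fE) => a [b [eab ->]]; rewrite !subUset !sub1set !inE.
case/andP => /orP[aX|aX] /orP[bX|bX]; rewrite ?aX ?bX ?orbT //.
  by case/orP: (AB_edge a b aX bX eab) => ->; rewrite ?orbT.
by rewrite e_sym in eab; case/orP: (AB_edge b a bX aX eab) => ->; rewrite ?orbT.
Qed.

Lemma iedges_disjoint A B : #|A :&: B| <= 1 -> [disjoint iedges A & iedges B].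
Proof.
move=> AB1; apply/pred0P => f /=; apply/negP.
rewrite !mem_iedges => /andP[/andP[fE fA] /andP[_ fB]].
have fAB : f \subset A :&: B by rewrite subsetI fA fB.
by have := leq_trans (subset_leq_card fAB) AB1; rewrite card_edge.
Qed.

Lemma adj_iedges S : adj S (iedges S) =2 restr S.
Proof.
move=> x y; rewrite /adj /restr /= mem_iedges mem_edges_set2 subUset !sub1set.
case: (x \in S); case: (y \in S) => //=; rewrite !andbT.
by case: eqVneq => // ->; rewrite e_irr.
Qed.

Lemma subtree_iedges S : S != set0 -> connected_in S -> subtree e S (iedges S).
Proof.
move=> S_n0 conS; split; first by apply/subsetP => f; rewrite mem_iedges => /andP[].
split=> // [f|x y xS yS|c c_uniq c_size].
- by rewrite mem_iedges => /andP[fE fS]; rewrite card_edge.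
- by rewrite (eq_connect (adj_iedges S)) conS.
- rewrite (eq_cycle (adj_iedges S)); apply: contra (e_acyclic c_uniq c_size).
  by apply: sub_cycle => a b /andP[_].
Qed.

Section Cut.
Variables (V : {set T}) (y : T) (Z : {set T}).
Hypothesis Z_nbhd : Z \subset nbhd V y.
Let U := \bigcup_(z in Z) branch V y z.

Lemma card_branches : #|U| = \sum_(z in Z) #|branch V y z|.
Proof.
apply: card_bigcup_disjoint => z1 z2 z1Z z2Z.
exact: branch_disjoint (subsetP Z_nbhd z1 z1Z) (subsetP Z_nbhd z2 z2Z).
Qed.

Lemma branches_sub : U \subset V :\ y.
Proof. by apply/bigcupsP => z _; apply: branch_sub. Qed.

Lemma y_notin_branches : y \notin U.
Proof. by apply/negP => /(subsetP branches_sub); rewrite !inE eqxx. Qed.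

Lemma connected_in_branches : connected_in (y |: U).
Proof.
apply: (connected_in_star (V := V) (setU11 y U)) => a.
rewrite in_setU1 => /predU1P[->|/bigcupP[z zZ aB] _]; first by rewrite eqxx.
exists z; first exact: (subsetP Z_nbhd).
by rewrite aB (subset_trans _ (subsetUr _ _)) // (bigcup_sup z zZ).
Qed.

Lemma connected_in_branches_compl : y \in V -> connected_in V -> connected_in (V :\: U).
Proof.
move=> yV conV; have yB : y \in V :\: U by rewrite inE y_notin_branches.
apply: (connected_in_star (V := V) yB) => a; rewrite inE => /andP[aU aV] ay.
have [z zN aBz] := branch_of_connect (subxx V) ay (conV _ _ yV aV).
exists z => //; rewrite aBz subsetD (subset_trans (branch_sub V y z)) ?subsetDl //=.
apply: bigcup_disjoint => z' z'Z; apply: branch_disjoint zN (subsetP Z_nbhd z' z'Z) _.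
by apply: contraNneq aU => zz'; rewrite /U; apply/bigcupP; exists z'; rewrite // -zz'.
Qed.

Lemma iedges_cut : y \in V ->
  iedges V = iedges (y |: U) :|: iedges (V :\: U) /\
  [disjoint iedges (y |: U) & iedges (V :\: U)].
Proof.
move=> yV; have UV : U \subset V := subset_trans branches_sub (subsetDl _ _).
have VE : (y |: U) :|: (V :\: U) = V.
  apply/setP => u; rewrite !inE; have [->|_] //= := eqVneq u y.
  by case: (boolP (u \in U)) => [/(subsetP UV)->|] //=; rewrite andbT.
split.
  rewrite -{1}VE; apply: iedges_setU => a b.
  rewrite !inE => /predU1P[->|aU] /andP[bU bV] eab.
    by rewrite y_notin_branches yV.
  have [->|b_y] := eqVneq b y; first by rewrite orbT.
  case/bigcupP: aU => z zZ aB; apply/orP; right => /=.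
  by apply/bigcupP; exists z; last exact: branch_closed aB bV b_y eab.
apply: iedges_disjoint; rewrite -(cards1 y) subset_leq_card //.
by apply/subsetP => u; rewrite !inE => /andP[/predU1P[->|uU] /andP[]]; rewrite ?eqxx ?uU.
Qed.
End Cut.

Lemma exists_small_branches m V :
  0 < m -> m <= #|V| -> connected_in V ->
  exists y (Z : {set T}), [/\ y \in V, Z \subset nbhd V y,
    {in Z, forall z, #|branch V y z| < m} & m.-1 <= \sum_(z in Z) #|branch V y z|].
Proof.
move=> m_gt0 mV conV.
pose large (p : T * T) := [&& p.1 \in V, p.2 \in nbhd V p.1 & m <= #|branch V p.1 p.2|].
have [p0 large_p0|no_large] := pickP large.
  (* Minimality forces every branch below [y] to be smaller than [m]. *)
  have [[x y] /and3P[/= xV yN m_le] min_xy] :=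
    arg_minnP (fun p : T * T => #|branch V p.1 p.2|) large_p0.
  have yV : y \in V by move: yN; rewrite inE => /andP[].
  exists y, (nbhd V y :\ x); split => //; first exact: subD1set.
    move=> z zN; rewrite ltnNge; apply/negP => m_le_z.
    have := proper_card (branch_proper xV yN zN).
    have zN' : z \in nbhd V y by move: zN; rewrite in_setD1 => /andP[].
    by rewrite ltnNge (min_xy (y, z)) // /large /= yV zN'.
  rewrite -card_branches ?subD1set //.
  apply: leq_trans (subset_leq_card (branch_cover yN)).
  by rewrite (cardsD1 y) mem_branch in m_le; lia.
have [y yV] : exists y, y \in V by apply/set0Pn; rewrite -card_gt0; lia.
exists y, (nbhd V y); split => // [z zN|].
  by move: (no_large (y, z)); rewrite /large /= yV zN /= ltnNge => ->.
rewrite -card_branches //; apply: leq_trans (subset_leq_card (nbhd_cover conV yV)).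
by rewrite (cardsD1 y) yV in mV; lia.
Qed.

Lemma split_off_piece m V :
  2 <= m -> connected_in V -> 4 * m < #|V| ->
  exists A B, [/\ connected_in A, connected_in B, m <= #|A| <= 4 * m, m <= #|B| < #|V|
    & iedges V = iedges A :|: iedges B /\ [disjoint iedges A & iedges B]].
Proof.
move=> m_ge2 conV V_large.
have mV : m <= #|V| by lia.
have [y [Z [yV ZN Z_small Z_sum]]] := exists_small_branches (ltnW m_ge2) mV conV.
have Z_le : {in Z, forall z, #|branch V y z| <= m.-1} by move=> z /Z_small; lia.
have [Z' sZ'Z Z'_sum] := subset_sum_between Z_sum Z_le.
have Z'N : Z' \subset nbhd V y := subset_trans sZ'Z ZN.
have UV := subset_trans (branches_sub V y Z') (subsetDl V [set y]).
set U := \bigcup_(z in Z') branch V y z.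
exists (y |: U), (V :\: U); split.
- exact: connected_in_branches.
- exact: connected_in_branches_compl.
- by rewrite cardsU1 y_notin_branches // card_branches //; lia.
- by rewrite cardsDS // card_branches //; lia.
- exact: iedges_cut.
Qed.

Lemma iedges_nth_sub (Ps : seq {set T}) j :
  iedges (nth set0 Ps j) \subset \bigcup_(P <- Ps) iedges P.
Proof.
have [j_lt|j_ge] := ltnP j (size Ps); last by rewrite nth_default // iedges0 sub0set.
by rewrite bigcup_seq (bigcup_sup (nth set0 Ps j)) // mem_nth.
Qed.

Lemma decompose_connected m V :
  2 <= m -> connected_in V -> m <= #|V| ->
  exists Ps : seq {set T},
    [/\ {in Ps, forall P, connected_in P /\ m <= #|P| <= 4 * m},
        forall i j, i != j -> [disjoint iedges (nth set0 Ps i) & iedges (nth set0 Ps j)]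
      & \bigcup_(P <- Ps) iedges P = iedges V].
Proof.
move=> m_ge2; elim: {V}_.+1 {-2}V (ltnSn #|V|) => // n IH V V_lt conV mV.
have [V_small|V_large] := leqP #|V| (4 * m).
  exists [:: V]; split=> [P|i j|]; last by rewrite big_seq1.
    by rewrite inE => /eqP ->; rewrite mV V_small.
  by case: i j => [|i] [|j] //= _; rewrite -setI_eq0 !nth_nil iedges0 ?setI0 ?set0I.
have [A [B [conA conB A_size /andP[mB B_lt] [VE AB_disj]]]] :=
  split_off_piece m_ge2 conV V_large.
have [|Ps [Ps_ok Ps_disj Ps_cover]] := IH B _ conB mB; first lia.
exists (A :: Ps); split=> [P|[|i] [|j] //= ij|]; last by rewrite big_cons Ps_cover VE.
- by rewrite inE => /predU1P[->|/Ps_ok].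
- by apply: disjointWr AB_disj; rewrite -Ps_cover iedges_nth_sub.
- by rewrite disjoint_sym; apply: disjointWr AB_disj; rewrite -Ps_cover iedges_nth_sub.
- exact: Ps_disj.
Qed.

Lemma iedges_setT : iedges [set: T] = edges e.
Proof. by apply/setP => f; rewrite mem_iedges subsetT andbT. Qed.

Lemma restr_setT : restr [set: T] =2 e.
Proof. by move=> x y; rewrite /restr /= !inE. Qed.
End Forest.

Unset Implicit Arguments.

Theorem lemma3p7 (m : nat) (T : finType) (e : rel T) :
  2 <= m ->
  symmetric e -> irreflexive e ->
  is_tree [set: T] (edges e) ->
  m <= #|T| ->
  exists (s : nat) (Ts : 'I_s -> {set T} * {set {set T}}),
    divide e Ts /\ (forall i, m <= #|(Ts i).1| <= 4 * m).
Proof.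
move=> m_ge2 e_sym e_irr [_ _ conT acycT] mT.
have adjT : adj [set: T] (edges e) =2 e.
  by move=> x y; rewrite -(iedges_setT e) adj_iedges ?restr_setT.
have e_acyclic (c : seq T) : uniq c -> 3 <= size c -> ~~ cycle e c.
  by move=> c_uniq c_size; rewrite -(eq_cycle adjT) acycT.
have conT' : connected_in e [set: T].
  by move=> x y _ _; rewrite (eq_connect (restr_setT e)) -(eq_connect adjT) conT.
rewrite -cardsT in mT.
have [Ps [Ps_ok Ps_disj Ps_cover]] :=
  decompose_connected e_sym e_irr e_acyclic m_ge2 conT' mT.
have Ps_nth (i : 'I_(size Ps)) := Ps_ok _ (mem_nth set0 (ltn_ord i)).
exists (size Ps), (fun i => (nth set0 Ps i, iedges e (nth set0 Ps i))); split.
  split=> [i|i j ij|] /=; last by rewrite -iedges_setT -Ps_cover (big_nth set0) big_mkord.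
    have [conP /andP[mP _]] := Ps_nth i.
    by apply: subtree_iedges => //; rewrite -card_gt0 (leq_trans (ltnW m_ge2) mP).
  exact: Ps_disj.
by move=> i; have [_] := Ps_nth i.
Qed.
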